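(* Let $G=XY$ be $n$-isobicyclic with canonical generators $x,y$, and let $\pi$ be any set of primes dividing $n$. Then $G_\pi=X_\pi Y_\pi$ is a Hall $\pi$-subgroup of $G$, and $(G_\pi,x_\pi,y_\pi)$ is an isobicyclic triple (of degree $n_\pi$, the largest $\pi$-number dividing $n$).
   Context: $G$ is $n$-isobicyclic with canonical generators $x,y$ if $X=\langle x\rangle$, $Y=\langle y\rangle$ are cyclic of order $n$, $G=XY$, $X\cap Y=1$, and some automorphism of $G$ transposes $x$ and $y$. For a set $\pi$ of primes, $X_\pi$ (resp. $Y_\pi$) is the Hall $\pi$-subgroup of the cyclic group $X$ (resp. $Y$), and $x=x_\pi x_{\pi'}$, $y=y_\pi y_{\pi'}$ are the unique factorisations with $x_\pi\in X_\pi$, $x_{\pi'}\in X_{\pi'}$, etc. A Hall $\pi$-subgroup is a subgroup whose order is a $\pi$-number and whose index is coprime to all primes in $\pi$. *)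

From mathcomp Require Import all_boot all_fingroup all_solvable.
Set Implicit Arguments. Unset Strict Implicit. Unset Printing Implicit Defensive.
Local Open Scope group_scope.

Definition isobicyclic (gT : finGroupType) (G : {set gT}) (x y : gT) (n : nat) : Prop :=
  [/\ #[x] = n, #[y] = n, <[x]> * <[y]> = G, <[x]> :&: <[y]> = 1
    & exists2 f : {perm gT}, f \in Aut G & f x = y /\ f y = x].

From mathcomp Require Import all_boot all_fingroup all_solvable.
Set Implicit Arguments. Unset Strict Implicit. Unset Printing Implicit Defensive.
Local Open Scope group_scope.

(* A product G = XY of two abelian groups is solvable (Ito: the commutator
   subgroup [X, Y] is abelian), so G has Hall pi-subgroups, one of which
   contains X_pi.  A conjugate of it contains Y_pi, and writing the conjugating
   element as an element of YX, whose factors normalise Y_pi and X_pi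
   respectively, yields a Hall pi-subgroup containing both.  As X_pi and Y_pi
   meet trivially and |X_pi||Y_pi| = |X|_pi |Y|_pi = |G|_pi, this Hall subgroup
   is X_pi Y_pi.  Automorphisms commute with taking pi-parts, so the swap of x
   and y restricts to a swap of x_pi and y_pi on X_pi Y_pi. *)

Section ProductOfAbelianGroups.

Variables (gT : finGroupType) (A B : {group gT}).
Hypotheses (cAA : abelian A) (cBB : abelian B) (cAB : commute A B).

(* Conjugating [~ a, b] by an element of A only changes its B-entry, and by an
   element of B only its A-entry, so these two conjugations commute. *)
Lemma conj_commg_mulC a b a1 b1 :
  a \in A -> b \in B -> a1 \in A -> b1 \in B ->
  [~ a, b] ^ (a1 * b1) = [~ a, b] ^ (b1 * a1).
Proof.
move=> Aa Bb Aa1 Bb1.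
have conj_in_mul u v : u \in A <*> B -> v \in A <*> B -> u ^ v \in A * B.
  by move=> ABu ABv; rewrite -comm_joingE // groupJ.
have AB_A u : u \in A -> u \in A <*> B by apply/subsetP/joing_subl.
have AB_B u : u \in B -> u \in A <*> B by apply/subsetP/joing_subr.
have fixA u v : u \in A -> v \in A -> u ^ v = u.
  by move=> Au Av; apply/conjg_fixP/commgP/(centsP cAA).
have fixB u v : u \in B -> v \in B -> u ^ v = u.
  by move=> Bu Bv; apply/conjg_fixP/commgP/(centsP cBB).
have commA u v : u \in A -> v \in A -> [~ u, v] = 1.
  by move=> Au Av; apply/eqP/commgP/(centsP cAA).
have commB u v : u \in B -> v \in B -> [~ u, v] = 1.
  by move=> Bu Bv; apply/eqP/commgP/(centsP cBB).
have [a2 b2 Aa2 Bb2 def_b] := mulsgP (conj_in_mul _ _ (AB_B _ Bb) (AB_A _ Aa1)).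
have := conj_in_mul _ _ (AB_A _ Aa) (AB_B _ Bb1); rewrite cAB.
case/mulsgP=> b3 a3 Bb3 Aa3 def_a.
have Ja1 u : u \in A -> [~ u, b] ^ a1 = [~ u, b2].
  move=> Au; rewrite conjRg fixA // def_b commgMJ (commA u a2) //.
  by rewrite conj1g mulg1.
have Jb1 v : v \in B -> [~ a, v] ^ b1 = [~ a3, v].
  move=> Bv; rewrite conjRg (fixB v) // def_a commMgJ (commB b3 v) //.
  by rewrite conj1g mul1g.
by rewrite !conjgM (Ja1 a) // !Jb1 // Ja1.
Qed.

Lemma abelian_commg_mul : abelian [~: A, B].
Proof.
rewrite abelian_gen; apply/centsP=> _ /imset2P[a b Aa Bb ->].
move=> _ /imset2P[a1 b1 Aa1 Bb1 ->]; apply/commgP/conjg_fixP.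
have -> : [~ a1, b1] = (a1^-1 * b1^-1) * (b1^-1 * a1^-1)^-1.
  by rewrite /commg /conjg invMg !invgK !mulgA.
by rewrite conjgM conj_commg_mulC ?groupV // conjgK.
Qed.

Lemma solvable_joing_abelian : solvable (A <*> B).
Proof.
have nRAB : A :|: B \subset 'N([~: A, B]).
  by rewrite (subset_trans _ (commg_norm A B)) // subset_gen.
rewrite (series_sol (commg_normal A B)) abelian_sol ?abelian_commg_mul //=.
apply: abelian_sol; change (abelian (<<A :|: B>> / [~: A, B])).
rewrite quotient_gen // abelian_gen quotientU.
rewrite /abelian subUset centU !subsetI andbC centsC -andbA -!abelianE.
by rewrite !quotient_abelian //= andbb quotient_cents2r.
Qed.

End ProductOfAbelianGroups.

Lemma solvable_mul_cycles (gT : finGroupType) (G : {group gT}) (x y : gT) :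
  <[x]> * <[y]> = G -> solvable G.
Proof.
move=> defG; have cXY : commute <[x]> <[y]>.
  by apply/comm_group_setP; rewrite defG groupP.
rewrite -defG -comm_joingE //.
exact: solvable_joing_abelian (cycle_abelian x) (cycle_abelian y) cXY.
Qed.

Lemma Hall_superset_mul (gT : finGroupType) (pi : nat_pred)
    (G X Y P Q : {group gT}) :
  solvable G -> X * Y = G -> P \subset X -> Q \subset Y ->
  X \subset 'N(P) -> Y \subset 'N(Q) -> pi.-group P -> pi.-group Q ->
  exists2 H : {group gT}, pi.-Hall(G) H & P * Q \subset H.
Proof.
move=> solG defG sPX sQY nPX nQY piP piQ.
have sXG : X \subset G by rewrite -defG mulG_subl.
have sYG : Y \subset G by rewrite -defG mulG_subr.
have [H hallH sPH] := Hall_superset solG (subset_trans sPX sXG) piP.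
have [g Gg sQHg] := Hall_subJ solG hallH (subset_trans sQY sYG) piQ.
have : g^-1 \in Y * X by rewrite -invMG defG invGid groupV.
case/mulsgP=> b a Yb Xa def_g.
exists (H :^ a^-1)%G; first by rewrite pHallJ ?groupV ?(subsetP sXG).
rewrite mul_subG // -sub_conjg.
  by rewrite (normsP nPX).
by rewrite -(normsP nQY b Yb) -conjsgM -def_g sub_conjgV.
Qed.

Section BicyclicHall.

Variables (gT : finGroupType) (G : {group gT}) (x y : gT) (pi : nat_pred).
Hypotheses (defG : <[x]> * <[y]> = G) (tiXY : <[x]> :&: <[y]> = 1).

Lemma mul_cycle_constt_Hall :
  exists2 H : {group gT}, pi.-Hall(G) H & <[x.`_pi]> * <[y.`_pi]> = H.
Proof.
have sXpX : <[x.`_pi]> \subset <[x]> by rewrite cycle_subG cycle_constt.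
have sYpY : <[y.`_pi]> \subset <[y]> by rewrite cycle_subG cycle_constt.
have [H hallH sXYpH] := Hall_superset_mul (solvable_mul_cycles defG) defG
  sXpX sYpY (sub_abelian_norm (cycle_abelian x) sXpX)
  (sub_abelian_norm (cycle_abelian y) sYpY) (p_elt_constt pi x) (p_elt_constt pi y).
have tiXYp : <[x.`_pi]> :&: <[y.`_pi]> = 1.
  by apply/trivgP; rewrite -tiXY setISS.
have cardG : #|G| = (#[x] * #[y])%N by rewrite -defG TI_cardMg.
exists H => //; apply/eqP; rewrite eqEcard sXYpH (card_Hall hallH) cardG.
by rewrite TI_cardMg //= -!orderE !order_constt partnM ?order_gt0.
Qed.

End BicyclicHall.

Lemma Aut_constt (gT : finGroupType) (G : {group gT}) (f : {perm gT})
    (pi : nat_pred) (x : gT) :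
  f \in Aut G -> x \in G -> f x.`_pi = (f x).`_pi.
Proof. by move=> AutGf Gx; apply: (morph_constt (autm_morphism AutGf)). Qed.

Lemma Aut_swap_norm_mul_cycles (gT : finGroupType) (G L : {group gT})
    (f : {perm gT}) (u v : gT) :
  f \in Aut G -> L \subset G -> <[u]> * <[v]> = L -> f u = v -> f v = u ->
  f \in 'N(L | 'P).
Proof.
move=> AutGf sLG defL fu fv.
have [sUG sVG] : <[u]> \subset G /\ <[v]> \subset G.
  by split; apply: subset_trans sLG; rewrite -defL ?mulG_subl ?mulG_subr.
have imL : autm AutGf @* L = L.
  rewrite -defL morphimMl // !morphim_cycle -?cycle_subG //.
  rewrite (fu : autm_morphism AutGf u = v) (fv : autm_morphism AutGf v = u).
  by apply/esym/comm_group_setP; rewrite defL groupP.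
rewrite !inE; apply/subsetP=> w Lw; rewrite inE /=.
by have := mem_morphim (autm AutGf) (subsetP sLG w Lw) Lw; rewrite imL.
Qed.

Theorem proposition5p1 (gT : finGroupType) (G : {group gT}) (x y : gT)
    (n : nat) (pi : nat_pred) :
  isobicyclic G x y n -> {subset pi <= \pi(n)} ->
  [/\ group_set (<[x.`_pi]> * <[y.`_pi]>),
      pi.-Hall(G) (<[x.`_pi]> * <[y.`_pi]>)
    & isobicyclic (<[x.`_pi]> * <[y.`_pi]>) x.`_pi y.`_pi n`_pi].
Proof.
case=> ox oy defG tiXY [f AutGf [fx fy]] _.
have [H hallH defH] := mul_cycle_constt_Hall pi defG tiXY.
have [Gx Gy] : x \in G /\ y \in G.
  by rewrite -!cycle_subG -defG mulG_subl mulG_subr.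
have fxp : f x.`_pi = y.`_pi by rewrite (Aut_constt _ AutGf Gx) fx.
have fyp : f y.`_pi = x.`_pi by rewrite (Aut_constt _ AutGf Gy) fy.
have nHf : f \in 'N(H | 'P).
  exact: Aut_swap_norm_mul_cycles AutGf (pHall_sub hallH) defH fxp fyp.
have [Hxp Hyp] : x.`_pi \in H /\ y.`_pi \in H.
  by rewrite -!cycle_subG -defH mulG_subl mulG_subr.
rewrite defH; split; [exact: groupP | exact: hallH | split] => //.
- by rewrite order_constt ox.
- by rewrite order_constt oy.
- by apply/trivgP; rewrite -tiXY setISS ?cycle_subG ?cycle_constt.
exists (restr_perm H f).
  exact: (@Aut_restr_perm _ G H (pHall_sub hallH) f AutGf).
by rewrite !restr_permE.
Qed.
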